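(* Let $T>0$ with $T/\pi\in\mathbb Q$. Let $u:\mathbb R\to L^2_{r,0}$, $u(t)=\mathcal S(t)u_0$, be a solution of the Benjamin–Ono equation with $u_0\in L^2_{r,0}$, and assume $u$ is $T$-periodic, i.e. $u(t+T)=u(t)$ for all $t\in\mathbb R$. Then $u_0$ is a finite gap potential, i.e. there is $N\ge1$ with $\zeta_n(u_0)=0$ for all $n>N$.
   Context: $\mathbb T=\mathbb R/2\pi\mathbb Z$. For $s\in\mathbb R$, $H^s_{r,0}$ is the Sobolev space of real-valued distributions $u$ on $\mathbb T$ with $H^s$-regularity and zero mean ($\hat u(0)=0$); $L^2_{r,0}=H^0_{r,0}$. The Benjamin–Ono (BO) equation is $\partial_tu=H\partial_x^2u-\partial_x(u^2)$, where $H$ is the Hilbert transform, the Fourier multiplier $\hat f(n)\mapsto -i\,\mathrm{sign}(n)\hat f(n)$ (with $0$ at $n=0$). For $\sigma\in\mathbb R$, $h^\sigma_+$ is the space of complex sequences $(z_n)_{n\ge1}$ with $\sum_{n\ge1}n^{2\sigma}|z_n|^2<\infty$. The following known facts are taken as given: for every $s>-1/2$ the BO equation is globally well posed in $H^s_{r,0}$ with continuous solution map $\mathcal S(t)$; there is a map $\Phi:u\mapsto(\zeta_n(u))_{n\ge1}$ (Birkhoff coordinates) which for every $s>-1/2$ is a homeomorphism $H^s_{r,0}\to h^{s+1/2}_+$ (in particular $u\in H^s_{r,0}$ iff $\Phi(u)\in h_+^{s+1/2}$), and for all $u\in H^s_{r,0}$, $n\ge1$, $t\in\mathbb R$, $\zeta_n(\mathcal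 S(t)u)=e^{i\omega_nt}\zeta_n(u)$ with $\omega_n=n^2-2\sum_{k=1}^nk|\zeta_k(u)|^2-2n\sum_{k>n}|\zeta_k(u)|^2$. *)

From Stdlib Require Import Reals ZArith.
From Coquelicot Require Import Coquelicot.
Open Scope R_scope.

(* A real-valued zero-mean distribution on T = R/2piZ is identified with its
   Fourier coefficient sequence c : Z -> C.  u is in L^2_{r,0} iff
   c 0 = 0 (zero mean), c (-n) = conj (c n) (real-valued), and
   sum_n |c n|^2 < oo (by the symmetry it suffices to sum over n >= 0). *)
Definition L2r0 (c : Z -> C) : Prop :=
  c 0%Z = 0%C /\
  (forall n : Z, c (- n)%Z = Cconj (c n)) /\
  ex_series (fun n : nat => (Cmod (c (Z.of_nat n))) ^ 2).

(* h^sigma_+ : sequences (z_n)_{n>=1} (here z : nat -> C, the value z 0 is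
   irrelevant) with sum_{n>=1} n^(2 sigma) |z_n|^2 < oo. *)
Definition h_plus (sigma : R) (z : nat -> C) : Prop :=
  ex_series (fun n : nat => Rpower (INR (S n)) (2 * sigma) * (Cmod (z (S n))) ^ 2).

Definition bo_omega (z : nat -> C) (n : nat) : R :=
  (INR n) ^ 2
  - 2 * sum_n (fun k => INR k * (Cmod (z k)) ^ 2) n
  - 2 * INR n * Series (fun j : nat => (Cmod (z (S (n + j)))) ^ 2).

Definition cis (x : R) : C := (cos x, sin x).

From Stdlib Require Import Reals ZArith Lra Lia Wf_nat Classical.
From Coquelicot Require Import Coquelicot.
Open Scope R_scope.

(* Write z = Phi(u0).  Periodicity of the
   flow and the phase formula give e^{i omega_n T} = 1 whenever z_n <> 0, so
   omega_n T is in pi Z; since T/pi = p/q this makes p (omega_m - omega_n)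
   an integer for any two active modes n, m.  On the other hand
   omega_{j+1} - omega_j = 2j + 1 - 2 R_j with R_j = sum_{k>j} |z_k|^2, so
   across a run of vanishing coefficients n < k < m we get
   omega_m - omega_n = m^2 - n^2 - 2 (m - n) R_{m-1}.  Hence
   2 p (m - n) R_{m-1} is a nonzero integer, i.e. it is at least 1 in
   absolute value.  But (m - n) R_{m-1} <= sum_{k>=m} k |z_k|^2, which tends
   to 0 because z is in h^{1/2}_+.  So there cannot be infinitely many active
   modes. *)

Lemma Series_nonneg (b : nat -> R) :
  (forall n, 0 <= b n) -> ex_series b -> 0 <= Series b.
Proof.
  intros Hb Hex.
  assert (H0 : Series (fun n => 0 * b n) = 0) by (rewrite Series_scal_l; ring).
  rewrite <- H0. apply Series_le; [intros n; specialize (Hb n); split; lra | exact Hex].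
Qed.

Lemma next_witness (P : nat -> Prop) (n : nat) :
  (exists k, (n < k)%nat /\ P k) ->
  exists m, (n < m)%nat /\ P m /\ forall k, (n < k < m)%nat -> ~ P k.
Proof.
  intros Hex.
  destruct (dec_inh_nat_subset_has_unique_least_element (fun k => (n < k)%nat /\ P k))
    as [m [[[Hnm Hm] Hleast] _]]; [intros k; apply classic | exact Hex |].
  exists m. split; [exact Hnm | split; [exact Hm |]].
  intros k Hk HPk. specialize (Hleast k (conj (proj1 Hk) HPk)). lia.
Qed.

Lemma nonzero_integer_abs (K : Z) : IZR K <> 0 -> 1 <= Rabs (IZR K).
Proof.
  intros HK. rewrite <- abs_IZR. apply IZR_le.
  assert (K <> 0%Z) by (intros ->; apply HK; reflexivity). lia.
Qed.

Definition tail (z : nat -> C) (j : nat) : R :=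
  Series (fun i : nat => Cmod (z (S (j + i))) ^ 2).

Definition weighted_tail (z : nat -> C) (j : nat) : R :=
  Series (fun i : nat => INR (S (j + i)) * Cmod (z (S (j + i))) ^ 2).

Lemma bo_omega_tail (z : nat -> C) (n : nat) :
  bo_omega z n =
  INR n ^ 2 - 2 * sum_n (fun k => INR k * Cmod (z k) ^ 2) n - 2 * INR n * tail z n.
Proof. reflexivity. Qed.

Lemma h_plus_half_weighted (z : nat -> C) :
  h_plus (1 / 2) z -> ex_series (fun n => INR (S n) * Cmod (z (S n)) ^ 2).
Proof.
  unfold h_plus. apply ex_series_ext. intros n.
  replace (2 * (1 / 2)) with 1 by field.
  apply Rmult_eq_compat_r, Rpower_1, lt_0_INR; lia.
Qed.

Section Tails.
Variable z : nat -> C.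
Hypothesis Hw : ex_series (fun n => INR (S n) * Cmod (z (S n)) ^ 2).

Lemma ex_series_tail (j : nat) : ex_series (fun i => Cmod (z (S (j + i))) ^ 2).
Proof.
  apply (ex_series_incr_n (fun i => Cmod (z (S i)) ^ 2) j).
  apply (@ex_series_le R_AbsRing R_CompleteNormedModule _ (fun n => INR (S n) * Cmod (z (S n)) ^ 2)); [intros n | exact Hw]. change (norm (Cmod (z (S n)) ^ 2)) with (Rabs (Cmod (z (S n)) ^ 2)).
  rewrite Rabs_pos_eq by apply pow2_ge_0.
  assert (1 <= INR (S n)) by (rewrite S_INR; pose proof (pos_INR n); lra).
  pose proof (pow2_ge_0 (Cmod (z (S n)))). nra.
Qed.

Lemma ex_series_weighted_tail (j : nat) :
  ex_series (fun i => INR (S (j + i)) * Cmod (z (S (j + i))) ^ 2).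
Proof. exact (proj1 (ex_series_incr_n _ j) Hw). Qed.

Lemma tail_step (j : nat) : tail z j = Cmod (z (S j)) ^ 2 + tail z (S j).
Proof.
  unfold tail. rewrite Series_incr_1 by apply ex_series_tail.
  rewrite Nat.add_0_r. f_equal. apply Series_ext. intros i.
  do 3 f_equal. lia.
Qed.

Lemma tail_nonneg (j : nat) : 0 <= tail z j.
Proof. apply Series_nonneg; [intros; apply pow2_ge_0 | apply ex_series_tail]. Qed.

Lemma tail_pos (j : nat) : z (S j) <> 0%C -> 0 < tail z j.
Proof.
  intros Hz. rewrite tail_step. pose proof (tail_nonneg (S j)).
  pose proof (pow_lt _ 2 (proj1 (Cmod_gt_0 _) Hz)). lra.
Qed.

Lemma omega_step (j : nat) :
  bo_omega z (S j) = bo_omega z j + 2 * INR j + 1 - 2 * tail z j.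
Proof.
  rewrite !bo_omega_tail, (tail_step j), sum_Sn, S_INR.
  change plus with Rplus. ring.
Qed.

(* Across a run of vanishing coefficients n < k < n + d + 1 the tail is
   frozen, so omega_m - omega_n = m^2 - n^2 - 2 (m - n) R_{m-1}. *)
Lemma omega_across_gap (n d : nat) :
  (forall k, (n < k < n + S d)%nat -> z k = 0%C) ->
  bo_omega z (n + S d) =
  bo_omega z n + INR (n + S d) ^ 2 - INR n ^ 2 - 2 * INR (S d) * tail z (n + d).
Proof.
  induction d as [|d IH]; intros Hgap.
  - rewrite Nat.add_0_r, Nat.add_1_r, omega_step, !S_INR, INR_0. ring.
  - assert (Hfrozen : tail z (n + d) = tail z (n + S d)).
    { rewrite tail_step, <- Nat.add_succ_r, (Hgap (n + S d)%nat) by lia.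
      rewrite Cmod_0. ring. }
    rewrite Nat.add_succ_r, omega_step, IH by (intros k Hk; apply Hgap; lia).
    rewrite Hfrozen, !S_INR, !plus_INR, !S_INR. ring.
Qed.

Lemma tail_weighted_bound (j : nat) : INR (S j) * tail z j <= weighted_tail z j.
Proof.
  unfold weighted_tail.
  rewrite Series_incr_1 by apply ex_series_weighted_tail.
  rewrite Nat.add_0_r, tail_step, Rmult_plus_distr_l.
  apply Rplus_le_compat_l.
  unfold tail. rewrite <- Series_scal_l. apply Series_le.
  - intros i. rewrite Nat.add_succ_r. split.
    + apply Rmult_le_pos; [apply pos_INR | apply pow2_ge_0].
    + apply Rmult_le_compat_r; [apply pow2_ge_0 | apply le_INR; lia].
  - exact (proj1 (ex_series_incr_1 _) (ex_series_weighted_tail j)).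
Qed.

Lemma weighted_tail_small (eps : R) :
  0 < eps -> exists M, forall j, (M <= j)%nat -> weighted_tail z j < eps.
Proof.
  intros He.
  pose (c := fun n => INR (S n) * Cmod (z (S n)) ^ 2).
  destruct (proj1 (is_series_Reals _ _) (Series_correct c Hw) eps He) as [N HN].
  exists (S N). intros j Hj.
  specialize (HN (pred j) ltac:(lia)). unfold R_dist in HN.
  rewrite (Series_incr_n c j) in HN by (auto; lia).
  apply Rabs_def2 in HN. unfold weighted_tail. change (Series (fun k => c (j + k)%nat) < eps). lra.
Qed.

(* Consecutive active modes n < m = n + d + 1 with p (omega_m - omega_n)
   an integer cannot be spaced by small tails: 2 p (d + 1) R_{m-1} is a nonzero
   integer, and (d + 1) R_{m-1} <= sum_{k>=m} k |z_k|^2. *)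
Lemma active_gap_lower_bound (p K : Z) (n d : nat) :
  p <> 0%Z ->
  (forall k, (n < k < n + S d)%nat -> z k = 0%C) ->
  z (n + S d)%nat <> 0%C ->
  IZR p * (bo_omega z (n + S d) - bo_omega z n) = IZR K ->
  1 <= 2 * Rabs (IZR p) * weighted_tail z (n + d).
Proof.
  intros Hp Hgap Hzm HK.
  rewrite omega_across_gap in HK by exact Hgap.
  set (j := (n + d)%nat) in *.
  assert (Hpos : 0 < tail z j) by (apply tail_pos; unfold j; rewrite <- Nat.add_succ_r; exact Hzm).
  pose proof (lt_0_INR (S d) ltac:(lia)) as Hd.
  set (K' := (p * (Z.of_nat (n + S d) * Z.of_nat (n + S d) - Z.of_nat n * Z.of_nat n) - K)%Z).
  assert (HK' : IZR p * (2 * INR (S d) * tail z j) = IZR K').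
  { unfold K'. rewrite minus_IZR, mult_IZR, minus_IZR, !mult_IZR, <- !INR_IZR_INZ.
    rewrite <- HK. ring. }
  assert (Hint : 1 <= Rabs (IZR p) * (2 * INR (S d) * tail z j)).
  { rewrite <- (Rabs_pos_eq (2 * INR (S d) * tail z j)) by nra.
    rewrite <- Rabs_mult, HK'. apply nonzero_integer_abs.
    rewrite <- HK'. apply Rmult_integral_contrapositive.
    split; [apply not_0_IZR, Hp | nra]. }
  assert (Hbound : INR (S d) * tail z j <= weighted_tail z j).
  { apply Rle_trans with (INR (S j) * tail z j); [| apply tail_weighted_bound].
    apply Rmult_le_compat_r; [lra | apply le_INR; unfold j; lia]. }
  apply Rle_trans with (1 := Hint).
  replace (Rabs (IZR p) * (2 * INR (S d) * tail z j))
    with (2 * Rabs (IZR p) * (INR (S d) * tail z j)) by ring.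
  apply Rmult_le_compat_l; [pose proof (Rabs_pos (IZR p)); lra | exact Hbound].
Qed.

(* If p (omega_m - omega_n) is an integer for all active modes n, m, then
   only finitely many modes are active: otherwise two consecutive active
   modes far out would violate the lower bound above. *)
Lemma finitely_many_active (p : Z) :
  p <> 0%Z ->
  (forall n m, (1 <= n)%nat -> (1 <= m)%nat -> z n <> 0%C -> z m <> 0%C ->
     exists K : Z, IZR p * (bo_omega z m - bo_omega z n) = IZR K) ->
  exists N : nat, (1 <= N)%nat /\ forall n, (N < n)%nat -> z n = 0%C.
Proof.
  intros Hp Hquant. apply NNPP. intros Hinfinite.
  assert (Hactive : forall N, exists n, (N < n)%nat /\ z n <> 0%C).
  { intros N. apply NNPP. intros Hnone. apply Hinfinite. exists (S N).
    split; [lia |]. intros n Hn. apply NNPP. intros Hzn. apply Hnone. exists n.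
    split; [lia | exact Hzn]. }
  assert (Hpabs : 1 <= Rabs (IZR p)) by (apply nonzero_integer_abs, not_0_IZR, Hp).
  destruct (weighted_tail_small (1 / (2 * Rabs (IZR p)))) as [M HM].
  { apply Rdiv_lt_0_compat; lra. }
  destruct (Hactive M) as [n [HnM Hzn]].
  destruct (next_witness (fun k => z k <> 0%C) n (Hactive n)) as [m [Hnm [Hzm Hgap]]].
  destruct (Hquant n m ltac:(lia) ltac:(lia) Hzn Hzm) as [K HK].
  set (d := (m - S n)%nat).
  assert (Hm : m = (n + S d)%nat) by (unfold d; lia).
  rewrite Hm in Hzm, Hgap, HK.
  assert (Hlarge := active_gap_lower_bound p K n d Hp
                      (fun k Hk => NNPP _ (Hgap k Hk)) Hzm HK).
  specialize (HM (n + d)%nat ltac:(lia)).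
  apply (Rmult_lt_compat_l (2 * Rabs (IZR p))) in HM; [| lra].
  replace (2 * Rabs (IZR p) * (1 / (2 * Rabs (IZR p)))) with 1 in HM by (field; lra).
  lra.
Qed.
End Tails.

Lemma cis_fixed_sin (theta : R) (w : C) :
  w <> 0%C -> Cmult (cis theta) w = w -> sin theta = 0.
Proof.
  intros Hw Hfix.
  assert (Hone : cis theta = RtoC 1).
  { transitivity (cis theta * (w * / w))%C.
    - rewrite Cinv_r by exact Hw. now rewrite Cmult_1_r.
    - rewrite Cmult_assoc, Hfix. apply Cinv_r, Hw. }
  exact (f_equal snd Hone).
Qed.

Lemma resonant_difference (T x y : R) (p q k1 k2 : Z) :
  q <> 0%Z -> T / PI = IZR p / IZR q ->
  x * T = IZR k1 * PI -> y * T = IZR k2 * PI ->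
  IZR p * (x - y) = IZR ((k1 - k2) * q).
Proof.
  intros Hq HT Hx Hy.
  pose proof PI_RGT_0 as Hpi.
  assert (Hq' : IZR q <> 0) by (apply not_0_IZR, Hq).
  assert (HTpq : T = PI * IZR p / IZR q).
  { apply (f_equal (fun r => r * PI)) in HT. unfold Rdiv in *.
    rewrite Rmult_assoc, Rinv_l, Rmult_1_r in HT by lra. rewrite HT. ring. }
  rewrite mult_IZR, minus_IZR.
  apply (Rmult_eq_reg_r (PI / IZR q)); [| unfold Rdiv; apply Rmult_integral_contrapositive; split; [lra | apply Rinv_neq_0_compat, Hq']].
  replace (IZR p * (x - y) * (PI / IZR q)) with (x * T - y * T) by (rewrite HTpq; field; exact Hq').
  rewrite Hx, Hy. field. exact Hq'.
Qed.

Theorem theorem3p1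
  (* the BO solution map S(t) on L^2_{r,0} (Fourier-coefficient model) *)
  (Sflow : R -> (Z -> C) -> (Z -> C))
  (* the Birkhoff map Phi : u |-> (zeta_n(u))_{n>=1} *)
  (zeta : (Z -> C) -> nat -> C)
  (HS : forall (t : R) (u : Z -> C), L2r0 u -> L2r0 (Sflow t u))
  (Hzeta_range : forall u, L2r0 u -> h_plus (1 / 2) (zeta u))
  (Hzeta_inj : forall u v, L2r0 u -> L2r0 v ->
      (forall n : nat, (1 <= n)%nat -> zeta u n = zeta v n) -> u = v)
  (Hzeta_surj : forall z : nat -> C, h_plus (1 / 2) z ->
      exists u, L2r0 u /\ forall n : nat, (1 <= n)%nat -> zeta u n = z n)
  (Hphase : forall (u : Z -> C) (n : nat) (t : R), L2r0 u -> (1 <= n)%nat ->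
      zeta (Sflow t u) n = Cmult (cis (bo_omega (zeta u) n * t)) (zeta u n))
  (T : R) (HT : 0 < T)
  (HTrat : exists (p q : Z), q <> 0%Z /\ T / PI = IZR p / IZR q)
  (u0 : Z -> C) (Hu0 : L2r0 u0)
  (Hper : forall t : R, Sflow (t + T) u0 = Sflow t u0) :
  exists N : nat, (1 <= N)%nat /\
    forall n : nat, (N < n)%nat -> zeta u0 n = 0%C.
Proof.
  destruct HTrat as [p [q [Hq HTpq]]].
  assert (Hp : p <> 0%Z).
  { intros ->. rewrite Rdiv_0_l in HTpq.
    pose proof (Rdiv_lt_0_compat T PI HT PI_RGT_0). lra. }
  assert (Hres : forall n, (1 <= n)%nat -> zeta u0 n <> 0%C ->
            exists k : Z, bo_omega (zeta u0) n * T = IZR k * PI).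
  { intros n Hn Hzn.
    assert (Hfix := f_equal (fun u => zeta u n) (Hper 0)). simpl in Hfix.
    rewrite Rplus_0_l, !Hphase, Rmult_0_r in Hfix by assumption.
    replace (cis 0) with (RtoC 1) in Hfix by (unfold cis; rewrite cos_0, sin_0; reflexivity).
    rewrite Cmult_1_l in Hfix.
    apply sin_eq_0_0, (cis_fixed_sin _ (zeta u0 n) Hzn Hfix). }
  apply (finitely_many_active (zeta u0)
           (h_plus_half_weighted _ (Hzeta_range u0 Hu0)) p Hp).
  intros n m Hn Hm Hzn Hzm.
  destruct (Hres n Hn Hzn) as [kn Hkn]. destruct (Hres m Hm Hzm) as [km Hkm].
  exists ((km - kn) * q)%Z. exact (resonant_difference T _ _ p q km kn Hq HTpq Hkm Hkn).
Qed.
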